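(* Let $n\ge 5$ be odd and let $G$ be the graph obtained from the cycle $C_n$ by adding one edge between two non-adjacent vertices of the cycle. Then $G$ is strongly EFX-orientable.
   Context: All graphs are finite and simple. For a graph $G=(V,E)$ and $v\in V$, $E(v)$ is the set of edges incident to $v$. A graphical instance on $G$ assigns to each vertex $v$ a valuation $f_v:2^E\to\mathbb{R}_{\ge 0}$ that is monotone ($A\subseteq B\Rightarrow f_v(A)\le f_v(B)$) and satisfies $f_v(X)=f_v(X\cap E(v))$ for all $X\subseteq E$. An orientation of $G$ chooses for each edge one of its endpoints as its head; vertex $v$ receives the bundle $X_v$ of edges whose head is $v$. The orientation is EFX if for all $u,v\in V$ and every $g\in X_v$, $f_u(X_u)\ge f_u(X_v\setminus\{g\})$. A graph $G$ is strongly EFX-orientable if for every graphical instance on $G$ there exists an EFX orientation. *)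

From HB Require Import structures.
From mathcomp Require Import all_boot all_order all_algebra.
From mathcomp Require Import reals.
Set Implicit Arguments. Unset Strict Implicit. Unset Printing Implicit Defensive.
Import Order.TTheory GRing.Theory Num.Theory.
Local Open Scope ring_scope.

Section Graphs.
Variable T : finType.
(* A simple graph on vertex set T is given by a symmetric irreflexive
   adjacency relation e; its edges are the 2-element sets {x,y} with e x y. *)
Variable e : rel T.

Definition is_edge (s : {set T}) : bool :=
  [exists x, exists y, [&& x != y, e x y & s == [set x; y]]].

Definition edge := { s : {set T} | is_edge s }.

Definition incident (v : T) : {set edge} := [set g : edge | v \in val g].

Variable R : realType.

Definition graphical_instance (f : T -> {set edge} -> R) : Prop :=
  forall v : T,
    (forall A : {set edge}, 0 <= f v A) /\
    (forall A B : {set edge}, A \subset B -> f v A <= f v B) /\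
    (forall X : {set edge}, f v X = f v (X :&: incident v)).

Definition orientation (h : edge -> T) : Prop := forall g : edge, h g \in val g.

Definition bundle (h : edge -> T) (v : T) : {set edge} := [set g | h g == v].

Definition EFX (f : T -> {set edge} -> R) (h : edge -> T) : Prop :=
  forall u v : T, forall g : edge, g \in bundle h v ->
    f u (bundle h v :\ g) <= f u (bundle h u).
End Graphs.

Definition strongly_EFX_orientable (T : finType) (e : rel T) : Prop :=
  forall (R : realType) (f : T -> {set edge e} -> R),
    graphical_instance f ->
    exists h : edge e -> T, orientation h /\ EFX f h.

Definition cycle_adj (n : nat) : rel 'I_n :=
  fun i j => ((val j == (val i).+1 %% n) || (val i == (val j).+1 %% n))%N.

Definition cycle_plus_chord (n : nat) (a b : 'I_n) : rel 'I_n :=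
  fun i j => cycle_adj i j || ((i == a) && (j == b)) || ((i == b) && (j == a)).

From HB Require Import structures.
From mathcomp Require Import all_boot all_order all_algebra.
From mathcomp Require Import reals.
From mathcomp Require Import zify.
Set Implicit Arguments. Unset Strict Implicit. Unset Printing Implicit Defensive.
Import Order.TTheory GRing.Theory Num.Theory.

(* Orient the chord towards one of its endpoints and the cycle edges so that
   every vertex but one, w, receives at most one edge.  Then only the bundle of
   w can violate EFX, and it does not as soon as every in-neighbour u of w
   values the edge it receives at least as much as the edge uw.  Say y prefers
   forward if it weakly prefers {y, y+1} to {y-1, y}.  If some t has a
   predecessor strictly preferring backward and a successor preferring forward,
   t is made the sink of the cycle; otherwise backward preference propagates
   along i |-> i+2, which on an odd cycle makes all preferences equal, and a
   rotation of the cycle or a sink next to a chord endpoint does the job. *)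

Section OrientationByRule.
Local Open Scope ring_scope.
Variables (T : finType) (e : rel T).
Hypotheses (e_sym : symmetric e) (e_irr : irreflexive e).

Lemma edge_ends (g : edge e) : exists x y, e x y /\ val g = [set x; y].
Proof.
by case: g => s /= /existsP [x /existsP [y /and3P [_ exy /eqP ->]]]; exists x, y.
Qed.

Lemma set2_mem_eq (x y u v : T) :
  u \in [set x; y] -> v \in [set x; y] -> u != v -> [set u; v] = [set x; y].
Proof.
by case/set2P=> ->; case/set2P=> ->; rewrite ?eqxx // => _; rewrite setUC.
Qed.

Lemma edge_val (g : edge e) u v : u \in val g -> v \in val g -> u != v -> val g = [set u; v].
Proof.
by have [x [y [_ ->]]] := edge_ends g; move=> ug vg uv; rewrite (set2_mem_eq ug vg uv).
Qed.

Definition edge_set (x y : T) : {set edge e} := [set g | val g == [set x; y]].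

Lemma edge_setC x y : edge_set x y = edge_set y x.
Proof. by apply/setP => g; rewrite !inE setUC. Qed.

Lemma edge_set1 (g : edge e) x y : val g = [set x; y] -> [set g] = edge_set x y.
Proof. by move=> vg; apply/setP => g'; rewrite !inE -val_eqE vg. Qed.

Variable rule : T -> T -> bool.
Hypothesis rule_asym : forall x y, e x y -> rule x y = ~~ rule y x.

Lemma rule_orientation : exists h : edge e -> T,
  (forall g, exists x, [/\ e x (h g), val g = [set x; h g] & rule x (h g)]) /\
  (forall g x y, e x y -> val g = [set x; y] -> rule x y -> h g = y).
Proof.
have head (g : edge e) : exists y, exists x, [/\ e x y, val g = [set x; y] & rule x y].
  have [x [y [exy vg]]] := edge_ends g.
  case rxy: (rule x y); first by exists y, x.
  exists x, y; rewrite e_sym vg setUC; split=> //.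
  by move: (rule_asym exy); rewrite rxy => /esym/negbFE.
have [h hP] := fin_all_exists head; exists h; split=> // g x y exy vg rxy.
have [x' [ex' vg' rx']] := hP g.
have : h g \in [set x; y] by rewrite -vg vg' set22.
case/set2P=> // hx.
have : y \in [set x'; h g] by rewrite -vg' vg set22.
case/set2P=> [yx' | yx]; last by rewrite yx hx e_irr in exy.
by move: rx'; rewrite hx -yx' rule_asym ?rxy // e_sym.
Qed.

Variables (R : realType) (f : T -> {set edge e} -> R).
Hypothesis f_inst : graphical_instance f.

Lemma EFX_of_heavy_vertex (h : edge e -> T) (w : T) :
  orientation h ->
  (forall v g1 g2, v != w -> h g1 = v -> h g2 = v -> g1 = g2) ->
  (forall g u, h g = w -> u \in val g -> u != w -> f u [set g] <= f u (bundle h u)) ->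
  EFX f h.
Proof.
move=> h_or in_uniq comp u v g; rewrite inE => /eqP hg.
have [_ [f_mono f_loc]] := f_inst u.
have f_min A : f u set0 <= f u A by apply: f_mono; apply: sub0set.
case: (eqVneq v w) => [vw | vw]; last first.
  suff -> : bundle h v :\ g = set0 by apply: f_min.
  apply/setP => g'; rewrite !inE; apply/andP => -[g'g /eqP hg'].
  by rewrite (in_uniq v g' g vw hg' hg) eqxx in g'g.
rewrite {}vw {hg}; case: (eqVneq u w) => [<- | uw]; first by apply: f_mono; apply: subsetDl.
rewrite f_loc; case: (set_0Vmem ((bundle h w :\ g) :&: incident e u)) => [-> | [g']].
  exact: f_min.
rewrite !inE => /andP [/andP [_ /eqP hg'] ug'].
apply: le_trans (comp g' u hg' ug' uw); apply: f_mono; apply/subsetP => g''.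
rewrite !inE => /andP [/andP [_ /eqP hg''] ug'']; apply/eqP/val_inj.
have wg'' : w \in val g'' by rewrite -hg''; apply: h_or.
have wg' : w \in val g' by rewrite -hg'; apply: h_or.
by rewrite (edge_val ug'' wg'' uw) (edge_val ug' wg' uw).
Qed.

Lemma EFX_of_rule (w : T) :
  (forall v x1 x2, v != w -> e x1 v -> e x2 v -> rule x1 v -> rule x2 v -> x1 = x2) ->
  (forall u, e u w -> rule u w ->
     exists z, [/\ e z u, rule z u & f u (edge_set u w) <= f u (edge_set z u)]) ->
  exists h, orientation h /\ EFX f h.
Proof.
move=> in_uniq comp; have [h [h_in h_rule]] := rule_orientation.
have h_or : orientation h.
  by move=> g; have [x [_ -> _]] := h_in g; apply: set22.
exists h; split=> //; apply: (EFX_of_heavy_vertex (w := w) h_or).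
  move=> v g1 g2 vw h1 h2.
  have [x1 [e1 v1 r1]] := h_in g1; have [x2 [e2 v2 r2]] := h_in g2.
  rewrite h1 in e1 v1 r1; rewrite h2 in e2 v2 r2.
  by apply: val_inj; rewrite v1 v2 (in_uniq v x1 x2).
move=> g u hg ug uw; have [x [ex vg rx]] := h_in g; rewrite hg in ex vg rx.
have xu : x = u by move: ug; rewrite vg => /set2P [] // /eqP; rewrite (negbTE uw).
subst x; have [z [ezu rzu le_uz]] := comp u ex rx.
have [_ [f_mono _]] := f_inst u.
rewrite (edge_set1 vg); apply: le_trans le_uz (f_mono _ _ _).
by apply/subsetP => g'; rewrite !inE => /eqP vg'; rewrite (h_rule g' z u).
Qed.
End OrientationByRule.

Section CycleArithmetic.
Variable n : nat.

Lemma ordS_cases (i : 'I_n) :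
  (i.+1 < n /\ ordS i = i.+1 :> nat) \/ (i.+1 = n /\ ordS i = 0 :> nat).
Proof.
rewrite /=; case: (ltngtP i.+1 n) => [lt_in | | eq_in].
- by left; rewrite modn_small.
- by rewrite ltnNge ltn_ord.
- by right; rewrite eq_in modnn.
Qed.

Lemma ord_pred_cases (i : 'I_n) :
  (0 < i /\ ord_pred i = i.-1 :> nat) \/ (i = 0 :> nat /\ ord_pred i = n.-1 :> nat).
Proof. by have := ordS_cases (ord_pred i); rewrite ord_predK; lia. Qed.

Lemma ordS_iter_val (i : 'I_n) m : val (iter m (@ordS n) i) = (i + m) %% n.
Proof.
elim: m => [|m IHm]; first by rewrite addn0 modn_small.
by rewrite iterS /= IHm -addn1 modnDml -addnA addn1.
Qed.

Lemma ordS2_invariant_const (P : pred 'I_n) : odd n ->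
  (forall i, P i -> P (ordS (ordS i))) -> forall i j, P i -> P j.
Proof.
move=> odd_n P2 i j Pi.
have Piter m : P (iter m.*2 (@ordS n) i).
  by elim: m => // m IHm; rewrite doubleS !iterS; apply: P2.
(* n.+1./2 is the inverse of 2 modulo the odd number n *)
pose m := (j + n - i) * n.+1./2.
suff -> : j = iter m.*2 (@ordS n) i by [].
apply: val_inj; rewrite ordS_iter_val.
have -> : m.*2 = (j + n - i) * n + (j + n - i).
  by rewrite /m -muln2 -mulnA muln2 halfK /= odd_n subn0 mulnS addnC.
have i_le : i <= j + n by have := ltn_ord i; lia.
by rewrite addnCA modnMDl subnKC // modnDr modn_small.
Qed.

Hypothesis n_gt2 : 2 < n.

Lemma ordS2_neq (i : 'I_n) : ordS (ordS i) != i.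
Proof.
rewrite -(inj_eq (@ord_inj n)); have := ordS_cases (ordS i); have := ordS_cases i.
have := ltn_ord i; lia.
Qed.

Lemma ordS_neq (i : 'I_n) : ordS i != i.
Proof. by rewrite -(inj_eq (@ord_inj n)); have := ordS_cases i; lia. Qed.

Lemma ord_pred_neq_ordS (i : 'I_n) : ord_pred i != ordS i.
Proof. by have := ordS2_neq (ord_pred i); rewrite ord_predK eq_sym. Qed.

Lemma ord_pred_neq (i : 'I_n) : ord_pred i != i.
Proof. by have := ordS_neq (ord_pred i); rewrite ord_predK eq_sym. Qed.

Lemma ord_pred2_neq (i : 'I_n) : ord_pred (ord_pred i) != i.
Proof. by have := ordS2_neq (ord_pred (ord_pred i)); rewrite !ord_predK eq_sym. Qed.

Definition in_arc (s t i : 'I_n) : bool :=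
  if s <= t then (s <= i) && (i < t) else (s <= i) || (i < t).

Section Arc.
Variables (s t : 'I_n).
Hypothesis t_neq_s : t != s.

Lemma in_arc_source : ~~ in_arc s t (ord_pred s) && in_arc s t s.
Proof.
move: t_neq_s; rewrite /in_arc -(inj_eq (@ord_inj n)); have := ord_pred_cases s.
have := ltn_ord s; have := ltn_ord t; case: ifP; lia.
Qed.

Lemma in_arc_no_sink v : v != t -> ~~ (in_arc s t (ord_pred v) && ~~ in_arc s t v).
Proof.
move: t_neq_s; rewrite /in_arc -!(inj_eq (@ord_inj n)); have := ord_pred_cases v.
have := ltn_ord v; have := ltn_ord s; have := ltn_ord t; case: ifP; lia.
Qed.

Lemma in_arc_pred2 : ord_pred t != s -> in_arc s t (ord_pred (ord_pred t)).
Proof.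
move: t_neq_s; rewrite /in_arc -!(inj_eq (@ord_inj n)); have := ord_pred_cases (ord_pred t).
have := ord_pred_cases t; have := ltn_ord s; have := ltn_ord t; case: ifP; lia.
Qed.

Lemma in_arc_succ : ordS t != s -> ~~ in_arc s t (ordS t).
Proof.
move: t_neq_s; rewrite /in_arc -!(inj_eq (@ord_inj n)); have := ordS_cases t.
have := ltn_ord s; have := ltn_ord t; case: ifP; lia.
Qed.
End Arc.
End CycleArithmetic.

Section CycleWithChord.
Variables (n : nat) (a b : 'I_n).
Hypotheses (n_gt2 : 2 < n) (a_neq_b : a != b) (a_nadj_b : ~~ cycle_adj a b).

Local Notation G := (cycle_plus_chord a b).

Definition chord (u v : 'I_n) : bool := ((u == a) && (v == b)) || ((u == b) && (v == a)).

Definition mate (v : 'I_n) : 'I_n := if v == a then b else a.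

Lemma b_neq_a : (b == a) = false.
Proof. by rewrite eq_sym (negbTE a_neq_b). Qed.

Lemma chord_ba : chord b a.
Proof. by rewrite /chord !eqxx orbT. Qed.

Lemma cycle_adjE (u v : 'I_n) : cycle_adj u v = (v == ordS u) || (u == ordS v).
Proof. by []. Qed.

Lemma cycle_adjC : symmetric (@cycle_adj n).
Proof. by move=> u v; rewrite !cycle_adjE orbC. Qed.

Lemma chordC : symmetric chord.
Proof. by move=> u v; rewrite /chord orbC andbC [(v == b) && _]andbC. Qed.

Lemma cycle_plus_chordE u v : G u v = cycle_adj u v || chord u v.
Proof. by rewrite /cycle_plus_chord /chord orbA. Qed.

Lemma cycle_plus_chord_sym : symmetric G.
Proof. by move=> u v; rewrite !cycle_plus_chordE cycle_adjC chordC. Qed.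

Lemma cycle_plus_chord_irr : irreflexive G.
Proof.
move=> u; rewrite cycle_plus_chordE cycle_adjE orbb [u == _]eq_sym (negbTE (ordS_neq n_gt2 u)) /=.
by apply/norP; split; apply/andP => -[/eqP-> /eqP ab]; move: a_neq_b; rewrite ab eqxx.
Qed.

Lemma cycle_adj_nchord u v : cycle_adj u v -> chord u v = false.
Proof.
by apply: contraTF; case/orP => /andP [/eqP-> /eqP->]; rewrite // cycle_adjC.
Qed.

Lemma chord_mate_eq u v : chord u v -> u = mate v.
Proof.
rewrite /mate; case/orP => /andP [/eqP-> /eqP->]; first by rewrite eq_sym (negbTE a_neq_b).
by rewrite eqxx.
Qed.

Lemma edge_set_chord u v : chord u v -> edge_set G u v = edge_set G a b.
Proof. by case/orP => /andP [/eqP-> /eqP->]; rewrite // edge_setC. Qed.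

Section CycleRule.
Variables (o : 'I_n -> bool) (x : 'I_n).
Hypothesis x_chord : (x == a) || (x == b).

(* [o i] orients the cycle edge {i, i+1} towards i+1; the chord points to x. *)
Definition cycle_rule (u v : 'I_n) : bool :=
  if chord u v then v == x else ((v == ordS u) && o u) || ((u == ordS v) && ~~ o v).

Lemma chord_mate : chord (mate x) x.
Proof.
by rewrite /chord /mate; case/orP: x_chord => /eqP->; rewrite ?b_neq_a !eqxx ?orbT.
Qed.

Lemma cycle_rule_asym u v : G u v -> cycle_rule u v = ~~ cycle_rule v u.
Proof.
rewrite /cycle_rule cycle_plus_chordE [chord v u]chordC; case: ifP => [ch _ | _ /=].
  case/orP: ch => /andP [/eqP-> /eqP->].
    by case/orP: x_chord => /eqP->; rewrite ?b_neq_a eqxx ?(negbTE a_neq_b).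
  by case/orP: x_chord => /eqP->; rewrite ?b_neq_a eqxx ?(negbTE a_neq_b).
rewrite orbF cycle_adjE => /orP [] /eqP->; rewrite eqxx.
  by rewrite [u == _]eq_sym (negbTE (ordS2_neq n_gt2 u)) /= orbF negbK.
by rewrite [v == _]eq_sym (negbTE (ordS2_neq n_gt2 v)) /= orbF.
Qed.

Lemma cycle_rule_inP u v : G u v -> cycle_rule u v ->
  [\/ u = ord_pred v /\ o u, u = ordS v /\ ~~ o v | v = x /\ u = mate x].
Proof.
rewrite /cycle_rule; case: ifP => [ch _ /eqP vx | _ _].
  by apply: Or33; split=> //; rewrite (chord_mate_eq ch) vx.
case/orP => /andP [/eqP vu ou]; last exact: Or32.
by apply: Or31; rewrite vu ordSK.
Qed.

Lemma cycle_rule_pred v : o (ord_pred v) -> G (ord_pred v) v /\ cycle_rule (ord_pred v) v.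
Proof.
have adj : cycle_adj (ord_pred v) v by rewrite cycle_adjE ord_predK eqxx.
by move=> ov; rewrite cycle_plus_chordE /cycle_rule adj cycle_adj_nchord // ord_predK eqxx ov.
Qed.

Lemma cycle_rule_succ v : ~~ o v -> G (ordS v) v /\ cycle_rule (ordS v) v.
Proof.
have adj : cycle_adj (ordS v) v by rewrite cycle_adjE eqxx orbT.
by move=> ov; rewrite cycle_plus_chordE /cycle_rule adj cycle_adj_nchord // eqxx ov orbT.
Qed.

Lemma cycle_rule_mate : G (mate x) x /\ cycle_rule (mate x) x.
Proof. by rewrite cycle_plus_chordE /cycle_rule chord_mate eqxx orbT. Qed.

Variables (R : realType) (f : 'I_n -> {set edge G} -> R) (w : 'I_n).
Hypothesis f_inst : graphical_instance f.

Local Open Scope ring_scope.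

Definition compensated (u : 'I_n) : Prop :=
  [\/ o (ord_pred u) /\ f u (edge_set G u w) <= f u (edge_set G (ord_pred u) u),
      ~~ o u /\ f u (edge_set G u w) <= f u (edge_set G u (ordS u)) |
      u = x /\ f u (edge_set G u w) <= f u (edge_set G a b)].

Lemma cycle_rule_EFX :
  (forall v : 'I_n, v != w -> ~~ (o (ord_pred v) && ~~ o v)) ->
  (x != w -> ~~ o (ord_pred x) && o x) ->
  (o (ord_pred w) -> compensated (ord_pred w)) ->
  (~~ o w -> compensated (ordS w)) ->
  (x == w -> compensated (mate x)) ->
  exists h, orientation h /\ EFX f h.
Proof.
move=> one_cycle_in x_no_cycle_in comp_pred comp_succ comp_mate.
apply: (EFX_of_rule cycle_plus_chord_sym cycle_plus_chord_irr cycle_rule_asym f_inst (w := w)).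
  move=> v y1 y2 vw.
  suff in_nbr y : G y v -> cycle_rule y v ->
      y = if v == x then mate x else if o (ord_pred v) then ord_pred v else ordS v.
    by move=> e1 e2 r1 r2; rewrite (in_nbr y1 e1 r1) (in_nbr y2 e2 r2).
  move=> ey ry; case: (cycle_rule_inP ey ry) => [[-> oy] | [-> noy] | [-> ->]].
  - case: eqP => [vx | _]; last by rewrite oy.
    by subst v; move: oy (x_no_cycle_in vw) => ->.
  - case: eqP => [vx | _].
      by subst v; move: noy (x_no_cycle_in vw) => /negbTE->; rewrite andbF.
    by case: ifP => // ov; move: (one_cycle_in v vw); rewrite ov noy.
  - by rewrite eqxx.
move=> u euw ruw.
have : compensated u.
  case: (cycle_rule_inP euw ruw) => [[-> ow] | [-> now] | [wx ->]].
  - exact: comp_pred.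
  - exact: comp_succ.
  - by apply: comp_mate; rewrite wx.
case=> [[ou le] | [ou le] | [ux le]].
- by have [e r] := cycle_rule_pred ou; exists (ord_pred u).
- by have [e r] := cycle_rule_succ ou; exists (ordS u); rewrite [edge_set G (ordS u) u]edge_setC.
- have [e r] := cycle_rule_mate; subst u; exists (mate x).
  by rewrite (edge_set_chord chord_mate).
Qed.

End CycleRule.

Lemma chord_far_or_around (t : 'I_n) :
  (exists s, [/\ (s == a) || (s == b), s != ord_pred t, s != t & s != ordS t]) \/
  chord (ord_pred t) (ordS t).
Proof.
case: (boolP [&& a != ord_pred t, a != t & a != ordS t]) => [/and3P [] | a_near].
  by left; exists a; rewrite eqxx.
case: (boolP [&& b != ord_pred t, b != t & b != ordS t]) => [/and3P [] | b_near].
  by left; exists b; rewrite eqxx orbT.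
have adj_pt : cycle_adj (ord_pred t) t by rewrite cycle_adjE ord_predK eqxx.
have adj_ts : cycle_adj t (ordS t) by rewrite cycle_adjE eqxx.
have adj_tp : cycle_adj t (ord_pred t) by rewrite cycle_adjC.
have adj_st : cycle_adj (ordS t) t by rewrite cycle_adjC.
right; move: a_near b_near a_neq_b a_nadj_b; rewrite /chord !negb_and !negbK.
case/or3P=> /eqP->; case/or3P=> /eqP->; rewrite ?eqxx ?orbT //.
- by rewrite adj_pt.
- by rewrite adj_tp.
- by rewrite adj_ts.
- by rewrite adj_st.
Qed.

Section Orientations.
Variables (R : realType) (f : 'I_n -> {set edge G} -> R).
Hypothesis f_inst : graphical_instance f.
Local Open Scope ring_scope.

(* The cycle edges run from s to t along both arcs and the chord points to s. *)
Lemma sink_EFX (s t : 'I_n) : (s == a) || (s == b) -> t != s ->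
  f (ord_pred t) (edge_set G (ord_pred t) t) <= f (ord_pred t)
    (if ord_pred t == s then edge_set G a b
     else edge_set G (ord_pred (ord_pred t)) (ord_pred t)) ->
  f (ordS t) (edge_set G (ordS t) t) <= f (ordS t)
    (if ordS t == s then edge_set G a b else edge_set G (ordS t) (ordS (ordS t))) ->
  exists h, orientation h /\ EFX f h.
Proof.
move=> s_chord t_neq_s pred_ok succ_ok.
apply: (cycle_rule_EFX (o := in_arc s t) s_chord f_inst (w := t)).
- by move=> v; apply: in_arc_no_sink.
- by move=> _; apply: in_arc_source.
- move=> _; case: eqP pred_ok => [-> | /eqP ps] le; first exact: Or33.
  by apply: Or31; split=> //; apply: in_arc_pred2.
- move=> _; case: eqP succ_ok => [-> | /eqP ss] le; first exact: Or33.
  by apply: Or32; split=> //; apply: in_arc_succ.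
- by move/eqP=> st; rewrite st eqxx in t_neq_s.
Qed.

(* Every cycle edge {i, i+1} points to i+1 (to i in backward_rotation_EFX) and
   the chord points to x. *)
Lemma forward_rotation_EFX (x y : 'I_n) : chord y x ->
  f (ord_pred x) (edge_set G (ord_pred x) x) <=
    f (ord_pred x) (edge_set G (ord_pred (ord_pred x)) (ord_pred x)) ->
  f y (edge_set G a b) <= f y (edge_set G (ord_pred y) y) ->
  exists h, orientation h /\ EFX f h.
Proof.
move=> yx pred_ok mate_ok.
have x_chord : (x == a) || (x == b) by case/orP: yx => /andP [_ ->]; rewrite ?orbT.
apply: (cycle_rule_EFX (o := fun _ => true) x_chord f_inst (w := x)) => //.
- by rewrite eqxx.
- by move=> _; apply: Or31.
- by move=> _; rewrite -(chord_mate_eq yx); apply: Or31; rewrite (edge_set_chord yx).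
Qed.

Lemma backward_rotation_EFX (x y : 'I_n) : chord y x ->
  f (ordS x) (edge_set G (ordS x) x) <= f (ordS x) (edge_set G (ordS x) (ordS (ordS x))) ->
  f y (edge_set G a b) <= f y (edge_set G y (ordS y)) ->
  exists h, orientation h /\ EFX f h.
Proof.
move=> yx succ_ok mate_ok.
have x_chord : (x == a) || (x == b) by case/orP: yx => /andP [_ ->]; rewrite ?orbT.
apply: (cycle_rule_EFX (o := fun _ => false) x_chord f_inst (w := x)) => //.
- by rewrite eqxx.
- by move=> _; apply: Or32.
- by move=> _; rewrite -(chord_mate_eq yx); apply: Or32; rewrite (edge_set_chord yx).
Qed.

Definition prefers_forward (y : 'I_n) : bool :=
  f y (edge_set G (ord_pred y) y) <= f y (edge_set G y (ordS y)).

Lemma EFX_of_prefers_forward :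
  (forall y, prefers_forward y) -> exists h, orientation h /\ EFX f h.
Proof.
move=> fwd; case: (lerP (f b (edge_set G a b)) (f b (edge_set G b (ordS b)))) => [b_ok | b_nok].
  apply: (backward_rotation_EFX (x := a) (y := b) chord_ba) => //.
  by have := fwd (ordS a); rewrite /prefers_forward ordSK [edge_set G a _]edge_setC.
apply: (sink_EFX (s := b) (t := ordS b)).
- by rewrite eqxx orbT.
- exact: ordS_neq.
- by rewrite ordSK eqxx ltW.
rewrite (negbTE (ordS2_neq n_gt2 b)).
by have := fwd (ordS (ordS b)); rewrite /prefers_forward ordSK [edge_set G (ordS b) _]edge_setC.
Qed.

Lemma EFX_of_prefers_backward :
  (forall y, ~~ prefers_forward y) -> exists h, orientation h /\ EFX f h.
Proof.
move=> bwd; have {}bwd y : f y (edge_set G y (ordS y)) < f y (edge_set G (ord_pred y) y).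
  by rewrite ltNge; apply: bwd.
case: (lerP (f b (edge_set G a b)) (f b (edge_set G (ord_pred b) b))) => [b_ok | b_nok].
  apply: (forward_rotation_EFX (x := a) (y := b) chord_ba) => //.
  by have := bwd (ord_pred a); rewrite ord_predK => /ltW.
apply: (sink_EFX (s := b) (t := ord_pred b)).
- by rewrite eqxx orbT.
- exact: ord_pred_neq.
- rewrite (negbTE (ord_pred2_neq n_gt2 b)).
  by have := bwd (ord_pred (ord_pred b)); rewrite ord_predK => /ltW.
- by rewrite ord_predK eqxx edge_setC ltW.
Qed.

Section LocalSink.
Variable t : 'I_n.
Hypotheses (pred_bwd : ~~ prefers_forward (ord_pred t)) (succ_fwd : prefers_forward (ordS t)).

Let pred_lt : f (ord_pred t) (edge_set G (ord_pred t) t) <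
  f (ord_pred t) (edge_set G (ord_pred (ord_pred t)) (ord_pred t)).
Proof. by move: pred_bwd; rewrite /prefers_forward ord_predK ltNge. Qed.

Let succ_le : f (ordS t) (edge_set G (ordS t) t) <=
  f (ordS t) (edge_set G (ordS t) (ordS (ordS t))).
Proof. by move: succ_fwd; rewrite /prefers_forward ordSK edge_setC. Qed.

Lemma chord_around_EFX : chord (ord_pred t) (ordS t) -> exists h, orientation h /\ EFX f h.
Proof.
move=> ch; have p_chord : (ord_pred t == a) || (ord_pred t == b).
  by case/orP: ch => /andP [-> _]; rewrite ?orbT.
have s_chord : (ordS t == a) || (ordS t == b).
  by case/orP: ch => /andP [_ ->]; rewrite ?orbT.
have ps := ord_pred_neq_ordS n_gt2 t.
case: (lerP (f (ord_pred t) (edge_set G (ord_pred t) t))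
            (f (ord_pred t) (edge_set G a b))) => [p_ok | p_nok].
  apply: (sink_EFX (t := t) p_chord).
  - by rewrite eq_sym (ord_pred_neq n_gt2).
  - by rewrite eqxx.
  - by rewrite eq_sym (negbTE ps).
case: (lerP (f (ordS t) (edge_set G (ordS t) t)) (f (ordS t) (edge_set G a b))) => [s_ok | s_nok].
  apply: (sink_EFX (t := t) s_chord).
  - by rewrite eq_sym (ordS_neq n_gt2).
  - by rewrite (negbTE ps) ltW.
  - by rewrite eqxx.
case: (lerP (f t (edge_set G (ord_pred t) t)) (f t (edge_set G t (ordS t)))) => [t_fwd | t_bwd].
  apply: (backward_rotation_EFX (x := ord_pred t) (y := ordS t)).
  - by rewrite chordC.
  - by rewrite ord_predK edge_setC.
  - exact: le_trans (ltW s_nok) succ_le.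
apply: (forward_rotation_EFX (x := ordS t) (y := ord_pred t) ch).
  by rewrite ordSK ltW.
exact: ltW (lt_trans p_nok pred_lt).
Qed.

Lemma local_sink_EFX : exists h, orientation h /\ EFX f h.
Proof.
case: (chord_far_or_around t) => [[s [s_chord sp st ss]] | ]; last exact: chord_around_EFX.
apply: (sink_EFX (t := t) s_chord).
- by rewrite eq_sym.
- by rewrite eq_sym (negbTE sp) ltW.
- by rewrite eq_sym (negbTE ss).
Qed.

End LocalSink.

End Orientations.
End CycleWithChord.

Theorem mainTheorem8 (n : nat) (a b : 'I_n) :
  5 <= n -> odd n -> a != b -> ~~ cycle_adj a b ->
  strongly_EFX_orientable (cycle_plus_chord a b).
Proof.
move=> n_ge5 odd_n a_neq_b a_nadj_b R f f_inst.
have n_gt2 : 2 < n by apply: leq_trans n_ge5.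
case: (boolP [exists t, ~~ prefers_forward f (ord_pred t) && prefers_forward f (ordS t)]).
  case/existsP=> t /andP [pred_bwd succ_fwd].
  exact: (local_sink_EFX n_gt2 a_neq_b a_nadj_b f_inst pred_bwd succ_fwd).
move=> no_local_sink.
have bwd_step y : ~~ prefers_forward f y -> ~~ prefers_forward f (ordS (ordS y)).
  move=> y_bwd; apply: contra no_local_sink => y2_fwd.
  by apply/existsP; exists (ordS y); rewrite ordSK y_bwd.
case: (boolP [forall y, prefers_forward f y]) => [/forallP | /forallPn [y y_bwd]].
  exact: (EFX_of_prefers_forward n_gt2 a_neq_b a_nadj_b f_inst).
apply: (EFX_of_prefers_backward n_gt2 a_neq_b a_nadj_b f_inst) => z.
exact: (@ordS2_invariant_const n (fun y => ~~ prefers_forward f y) odd_n bwd_step y z y_bwd).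
Qed.
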